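(* Consider a CMILS instance and let $x$ satisfy $x_{s,i}\in[0,1]$ for all $i\in[N]$, $s\in[r_i]$, and $\sum_{s\in[r_i]}x_{s,i}=1$ for every $i\in[N]$. For every interval $(a,b]$ over $[T]$ define $$R_{a,b}:=\sum_{i\in[N]:\ r_i\in(a,b]}\max\Big\{1-\tfrac52x_{[a],i},\,0\Big\}d_i .$$ Let $y^*\in\{0,1\}^T$ and $S^*=\{s\in[T]:y^*_s=1\}$. If $C(S^*\cap(a,b])\ge R_{a,b}$ for every interval $(a,b]$ over $[T]$, then there exists $x^*$ such that $(x^*,y^* )$ is a feasible solution to the CMILS instance and $\mathrm{hcost}(x^* )\le\frac52\,\mathrm{hcost}(x)$.
   Context: CMILS problem: periods $[T]$, items $[N]$; item $i$ has demand $d_i>0$ due by time $r_i\in[T]$; period $s$ has ordering cost $K_s>0$ and capacity $C_s>0$; $h_i(s)\ge0$ ($s\in[r_i]$) is the per-unit holding cost of item $i$ from $s$ to $r_i$, non-increasing in $s$ with $h_i(r_i)=0$. A feasible solution is $(x,y)$ with $y\in\{0,1\}^T$, $x_{s,i}\in[0,1]$ ($i\in[N]$, $s\in[r_i]$), $\sum_{s\in[r_i]}x_{s,i}=1$ for every $i$, $x_{s,i}\le y_s$, and $\sum_{i: r_i\ge s}x_{s,i}d_i\le y_sC_s$ for every $s$. Notation: $x_{s,i}=0$ for $s>r_i$; $x_{S,i}=\sum_{s\in S}x_{s,i}$ for $S\subseteq[T]$; $[a]=\{1,\dots,a\}$ ($[0]=\emptyset$); $(a,b]=\{a+1,\dots,b\}$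 and an interval over $[T]$ is $(a,b]$ with integers $0\le a<b\le T$; $C(S)=\sum_{s\in S}C_s$; $\mathrm{hcost}(x)=\sum_{i\in[N]}d_i\sum_{s\in[r_i]}x_{s,i}h_i(s)$. *)

From HB Require Import structures.
From mathcomp Require Import all_boot all_order all_algebra.
From mathcomp Require Import reals.
Set Implicit Arguments. Unset Strict Implicit. Unset Printing Implicit Defensive.
Import Order.TTheory GRing.Theory Num.Theory.
Local Open Scope ring_scope.

(* Conventions: periods are the naturals 1..T, items are 'I_N.
   An assignment x : nat -> 'I_N -> R gives x_{s,i} = x s i; only the
   values with 1 <= s <= r_i are meaningful (x_{s,i} := 0 for s > r_i,
   which the definitions below enforce by only summing over s <= r_i). *)

Section CMILS.
Variables (R : realType) (T N : nat) (d : 'I_N -> R) (r : 'I_N -> nat)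
  (K C : nat -> R) (h : 'I_N -> nat -> R).

Definition cmils_instance : Prop :=
  (forall i, 0 < d i) /\
  (forall i, (1 <= r i <= T)%N) /\
  (forall s, (1 <= s <= T)%N -> 0 < K s) /\
  (forall s, (1 <= s <= T)%N -> 0 < C s) /\
  (forall i s, (1 <= s <= r i)%N -> 0 <= h i s) /\
  (forall i s t, (1 <= s)%N -> (s <= t)%N -> (t <= r i)%N -> h i t <= h i s) /\
  (forall i, h i (r i) = 0).

Definition xpre (x : nat -> 'I_N -> R) (a : nat) (i : 'I_N) : R :=
  \sum_(1 <= s < a.+1 | (s <= r i)%N) x s i.

Definition assignment (x : nat -> 'I_N -> R) : Prop :=
  (forall i s, (1 <= s <= r i)%N -> 0 <= x s i <= 1) /\
  (forall i, \sum_(1 <= s < (r i).+1) x s i = 1).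

Definition feasible (x : nat -> 'I_N -> R) (y : nat -> bool) : Prop :=
  assignment x /\
  (forall i s, (1 <= s <= r i)%N -> x s i <= (y s)%:R) /\
  (forall s, (1 <= s <= T)%N ->
     \sum_(i | (s <= r i)%N) x s i * d i <= (y s)%:R * C s).

Definition hcost (x : nat -> 'I_N -> R) : R :=
  \sum_(i : 'I_N) d i * \sum_(1 <= s < (r i).+1) x s i * h i s.

Definition Rab (x : nat -> 'I_N -> R) (a b : nat) : R :=
  \sum_(i : 'I_N | (a < r i <= b)%N)
     Num.max (1 - (5%:R / 2%:R) * xpre x a i) 0 * d i.

Definition capS (y : nat -> bool) (a b : nat) : R :=
  \sum_(a.+1 <= s < b.+1 | y s) C s.

End CMILS.

From HB Require Import structures.
From mathcomp Require Import all_boot all_order all_algebra.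
From mathcomp Require Import reals.
From mathcomp Require Import ring lra zify.
Set Implicit Arguments. Unset Strict Implicit. Unset Printing Implicit Defensive.
Import Order.TTheory GRing.Theory Num.Theory.
Local Open Scope ring_scope.

(* Let q_i(a) = max(1 - 5/2 x_{[a],i}, 0); it decreases from q_i(0) = 1 to
   q_i(r_i) = 0.  Cut the demand of item i into jobs of size
   (q_i(a) - q_i(a+1)) d_i, a < r_i, released at a+1 and due at r_i.  The jobs
   whose window lies in (a,b] have total size exactly R_{a,b}, so the hypothesis
   is Hall's condition for fractionally scheduling the jobs into the open
   periods, and filling one period at a time in earliest-deadline-first order
   shows that it suffices.  A job released at a+1 then pays at most h_i(a+1) per
   unit, and summation by parts turns 1 - q_i(t) <= 5/2 x_{[t],i} into the cost
   bound. *)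

Lemma sum_by_parts (R : comPzRingType) (g H : nat -> R) (n : nat) :
  \sum_(0 <= a < n) g a * H a.+1 =
  (\sum_(0 <= a < n) g a) * H n +
  \sum_(0 <= t < n) (\sum_(0 <= a < t) g a) * (H t - H t.+1).
Proof.
elim: n => [|n IH]; first by rewrite !big_geq // mul0r addr0.
by rewrite !big_nat_recr //= IH; ring.
Qed.

Lemma sum_ord_range (R : nmodType) (n lo hi : nat) (F : nat -> R) :
  (hi <= n)%N -> (forall a, (hi <= a)%N -> F a = 0) ->
  \sum_(a < n | (lo <= a)%N) F a = \sum_(lo <= a < hi) F a.
Proof.
move=> hi_n F0; transitivity (\sum_(lo <= a < n) F a).
  by rewrite (big_nat_widenl _ 0) // big_mkord.
rewrite (big_nat_widen lo hi n) // [RHS]big_mkcondr; apply: eq_big_nat => a _.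
by case: ltnP => // /F0.
Qed.

Lemma sum_ltnS (R : nmodType) (J : finType) (k : J -> nat) (F : J -> R) t :
  \sum_(j | (k j < t.+1)%N) F j =
  \sum_(j | (k j < t)%N) F j + \sum_(j | k j == t) F j.
Proof.
rewrite (bigID (fun j => (k j < t)%N)) /=.
by congr (_ + _); apply: eq_bigl => j; lia.
Qed.

Section PrefixFill.
Variables (R : realFieldType) (J : finType) (k : J -> nat) (p : J -> R).
Hypothesis p_ge0 : forall j, 0 <= p j.

Lemma prefix_sums_realizable (f : nat -> R) :
  f 0%N = 0 -> (forall t, 0 <= f t.+1 - f t <= \sum_(j | k j == t) p j) ->
  exists2 u : J -> R, forall j, 0 <= u j <= p j &
    forall t, \sum_(j | (k j < t)%N) u j = f t.
Proof.
move=> f0 df; pose P t := \sum_(j | k j == t) p j.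
(* spread each increment of [f] over the [j] of that key, proportionally to [p] *)
pose u j := p j * ((f (k j).+1 - f (k j)) / P (k j)).
have frac t : 0 <= (f t.+1 - f t) / P t <= 1.
  have /andP[d_ge0 d_le] := df t.
  have [->|Pn0] := eqVneq (P t) 0; first by rewrite invr0 mulr0 lexx ler01.
  have P_gt0 : 0 < P t by rewrite lt0r Pn0 sumr_ge0.
  by rewrite divr_ge0 ?ler_pdivrMr ?mul1r // ltW.
have fill t : P t * ((f t.+1 - f t) / P t) = f t.+1 - f t.
  have [P0|Pn0] := eqVneq (P t) 0; last by rewrite mulrC divfK.
  by have := df t; rewrite -/(P t) P0 mul0r -eq_le => /eqP.
exists u => [j|t].
  by have /andP[? ?] := frac (k j); rewrite mulr_ge0 //= ler_piMr.
elim: t => [|t IH]; first by rewrite big_pred0 // f0.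
rewrite sum_ltnS IH (eq_bigr (fun j => p j * ((f t.+1 - f t) / P t))).
  by rewrite -mulr_suml fill addrC subrK.
by move=> j /eqP <-.
Qed.

Lemma min_prefix_fill (c : R) : 0 <= c ->
  exists2 u : J -> R, forall j, 0 <= u j <= p j &
    forall t, \sum_(j | (k j < t)%N) u j =
              Num.min c (\sum_(j | (k j < t)%N) p j).
Proof.
move=> c_ge0; apply: prefix_sums_realizable => [|t].
  by rewrite big_pred0 // min_r.
rewrite sum_ltnS; have : 0 <= \sum_(j | k j == t) p j by exact: sumr_ge0.
by rewrite !minEle; case: ifP; case: ifP; lra.
Qed.

End PrefixFill.

Section FractionalSchedule.
Variables (R : realFieldType) (J : finType) (dl : J -> nat) (c : nat -> R).
Hypothesis c_ge0 : forall s, 0 <= c s.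

Definition hall_condition (lo hi : nat) (rl : J -> nat) (p : J -> R) : Prop :=
  forall a b, (lo <= a)%N -> (a < b <= hi)%N ->
    \sum_(j | ((a < rl j) && (dl j <= b))%N) p j <= \sum_(a.+1 <= s < b.+1) c s.

Definition in_windows (lo hi : nat) (rl : J -> nat) (p : J -> R) : Prop :=
  forall j, p j != 0 -> ((lo < rl j <= dl j) && (dl j <= hi))%N.

Definition schedule (lo hi : nat) (rl : J -> nat) (p : J -> R)
    (z : nat -> J -> R) : Prop :=
  [/\ forall s j, 0 <= z s j,
      forall s j, z s j != 0 -> ((lo < s <= hi) && (rl j <= s <= dl j))%N,
      forall j, \sum_(lo.+1 <= s < hi.+1) z s j = p j &
      forall s, \sum_j z s j <= c s].

Section FirstPeriod.
Variables (lo hi : nat) (rl : J -> nat) (p u : J -> R).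
Hypotheses (lt_lo_hi : (lo < hi)%N) (p_ge0 : forall j, 0 <= p j)
  (p_windows : in_windows lo hi rl p) (p_hall : hall_condition lo hi rl p).

Let avail j := if (rl j <= lo.+1)%N then p j else 0.

(* [u] fills period [lo.+1] with the jobs released by then, in
   earliest-deadline-first order. *)
Hypotheses (u_bounds : forall j, 0 <= u j <= avail j)
  (u_prefix : forall t, \sum_(j | (dl j < t)%N) u j =
                        Num.min (c lo.+1) (\sum_(j | (dl j < t)%N) avail j)).

Let rest j := p j - u j.
Let rl' j := maxn (rl j) lo.+2.

Lemma avail_le j : avail j <= p j.
Proof. by rewrite /avail; case: ifP. Qed.

Lemma u_eq0 j : avail j = 0 -> u j = 0.
Proof.
by move=> a0; apply: le_anti; have /andP[-> ua] := u_bounds j; rewrite -a0 ua.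
Qed.

Lemma sum_u_le : \sum_j u j <= c lo.+1.
Proof.
have dl_small j : (dl j < (\max_i dl i).+1)%N by rewrite ltnS leq_bigmax.
by rewrite -(eq_bigl _ _ dl_small) u_prefix ge_min lexx.
Qed.

Lemma u_saturated t : \sum_(j | (dl j < t)%N) avail j <= c lo.+1 ->
  forall j, (dl j < t)%N -> u j = avail j.
Proof.
move=> avail_le_c j dl_t; apply/esym/eqP; rewrite -subr_eq0; apply/eqP.
move: j dl_t.
apply: psumr_eq0P => [j _|]; first by have /andP[_] := u_bounds j; rewrite subr_ge0.
by rewrite sumrB u_prefix min_r // subrr.
Qed.

Lemma sum_p_windowed (P : pred J) :
  \sum_(j | P j) p j = \sum_(j | (lo < rl j)%N && P j) p j.
Proof.
rewrite big_mkcondl; apply: eq_bigr => j _; case: ifP => // lo_rl.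
by apply/eqP; apply: contraT => /p_windows; rewrite lo_rl.
Qed.

Lemma p_hall_lo b : (lo < b <= hi)%N ->
  \sum_(j | (dl j <= b)%N) p j <= \sum_(lo.+1 <= s < b.+1) c s.
Proof. by move=> b_range; rewrite sum_p_windowed; apply: p_hall. Qed.

Lemma rest_ge0 j : 0 <= rest j.
Proof.
by have /andP[_ ua] := u_bounds j; rewrite subr_ge0 (le_trans ua) ?avail_le.
Qed.

Lemma rest_windows : in_windows lo.+1 hi rl' rest.
Proof.
move=> j; rewrite /rest /rl'; have [p0|/p_windows] := eqVneq (p j) 0.
  by rewrite p0 u_eq0 ?subrr ?eqxx // /avail p0; case: ifP.
move=> /andP[/andP[lo_rl rl_dl] dl_hi] rest_neq0.
suff : dl j != lo.+1 by move=> ?; apply/andP; split; lia.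
apply: contraNneq rest_neq0 => dl_lo; rewrite (@u_saturated lo.+2) ?dl_lo //.
  by rewrite /avail ifT ?subrr ?dl_lo // -dl_lo.
have := @p_hall_lo lo.+1; rewrite big_nat1 ltnSn lt_lo_hi => /(_ isT).
by apply: le_trans; apply: ler_sum => i _; exact: avail_le.
Qed.

Lemma rest_hall : hall_condition lo.+1 hi rl' rest.
Proof.
move=> a b lo_a /andP[a_b b_hi].
have [lo_lt_a|a_le] := ltnP lo.+1 a.
  rewrite (eq_bigl (fun j => (a < rl j) && (dl j <= b))%N) => [|j]; last first.
    by rewrite /rl'; lia.
  apply: le_trans (p_hall (ltnW (ltnW lo_lt_a)) _); last by rewrite a_b b_hi.
  apply: ler_sum => j _; have /andP[u_ge0 _] := u_bounds j.
  by rewrite /rest lerBlDr lerDl.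
have {a_le lo_a} a_lo : a = lo.+1 by lia.
subst a.
rewrite (eq_bigl (fun j => dl j <= b)%N) => [|j]; last by rewrite /rl'; lia.
(* Either period [lo.+1] fully serves every released job due by [b], or it is
   used to capacity. *)
have [sat|unsat] := leP (\sum_(j | (dl j < b.+1)%N) avail j) (c lo.+1).
  rewrite (eq_bigr (fun j => if (lo.+1 < rl j)%N then p j else 0)) => [|j dl_b].
    rewrite -big_mkcondr (eq_bigl _ _ (fun j => andbC _ _)).
    by apply: p_hall => //; rewrite a_b b_hi.
  by rewrite /rest (u_saturated sat dl_b) /avail; case: ltnP; rewrite ?subrr ?subr0.
rewrite /rest sumrB (u_prefix b.+1) min_l ?(ltW unsat) // lerBlDr addrC.
rewrite -big_ltn; last lia.
by apply: p_hall_lo; lia.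
Qed.

Lemma schedule_cons (z : nat -> J -> R) : schedule lo.+1 hi rl' rest z ->
  schedule lo hi rl p (fun s => if s == lo.+1 then u else z s).
Proof.
case=> z_ge0 z_supp z_sum z_cap; split => [s j|s j|j|s] /=.
- by case: eqP => _; [have /andP[] := u_bounds j | exact: z_ge0].
- case: ifP => [/eqP -> u_neq0|_ /z_supp]; last by rewrite /rl'; lia.
  have : avail j != 0 by apply: contra_neq u_neq0; exact: u_eq0.
  by rewrite /avail; case: ifP => [rl_lo /p_windows|_]; [lia | rewrite eqxx].
- rewrite big_ltn ?ltnS // eqxx (eq_big_nat _ _ (F2 := fun s => z s j)).
    by rewrite z_sum /rest addrC subrK.
  by move=> s s_range; case: eqP => // s_lo; move: s_range; rewrite s_lo ltnn.
- by case: eqP => [->|_]; [exact: sum_u_le | exact: z_cap].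
Qed.

End FirstPeriod.

Lemma schedule_exists (lo hi : nat) (rl : J -> nat) (p : J -> R) :
  (forall j, 0 <= p j) -> in_windows lo hi rl p -> hall_condition lo hi rl p ->
  exists z, schedule lo hi rl p z.
Proof.
move Dn : (hi - lo)%N => n.
elim: n lo Dn rl p => [|n IH] lo Dn rl p p_ge0 p_win p_hall.
  exists (fun _ _ => 0); split=> [s j|s j|j|s]; rewrite ?lexx ?eqxx ?big1 //.
  by apply/esym/eqP; apply: contraT => /p_win; lia.
have lt_lo_hi : (lo < hi)%N by lia.
pose avail j := if (rl j <= lo.+1)%N then p j else 0.
have avail_ge0 j : 0 <= avail j by rewrite /avail; case: ifP.
have [u u_bounds u_prefix] := min_prefix_fill dl avail_ge0 (c_ge0 lo.+1).
have [z z_sched] :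
    exists z, schedule lo.+1 hi (fun j => maxn (rl j) lo.+2) (fun j => p j - u j) z.
  apply: IH.
  - lia.
  - exact: (rest_ge0 p_ge0 u_bounds).
  - exact: (rest_windows lt_lo_hi p_ge0 p_win p_hall u_bounds u_prefix).
  - exact: (rest_hall lt_lo_hi p_win p_hall u_bounds u_prefix).
exists (fun s => if s == lo.+1 then u else z s).
exact: (schedule_cons lt_lo_hi p_win u_bounds u_prefix z_sched).
Qed.

End FractionalSchedule.

Section Rounding.
Variables (R : realType) (T N : nat) (d : 'I_N -> R) (r : 'I_N -> nat)
  (C : nat -> R) (h : 'I_N -> nat -> R) (x : nat -> 'I_N -> R) (y : nat -> bool).
Hypotheses (d_gt0 : forall i, 0 < d i) (r_range : forall i, (1 <= r i <= T)%N)
  (C_gt0 : forall s, (1 <= s <= T)%N -> 0 < C s)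
  (h_antitone : forall i s t,
     (1 <= s)%N -> (s <= t)%N -> (t <= r i)%N -> h i t <= h i s)
  (h_due : forall i, h i (r i) = 0)
  (x_assignment : assignment r x)
  (Rab_le_capS : forall a b, (a < b <= T)%N -> Rab d r x a b <= capS C y a b).

Definition uncovered (i : 'I_N) (a : nat) : R :=
  Num.max (1 - (5%:R / 2%:R) * xpre r x a i) 0.

Lemma xpreE i a : (a <= r i)%N -> xpre r x a i = \sum_(0 <= s < a) x s.+1 i.
Proof.
move=> a_le; rewrite /xpre big_add1 /= big_mkcond; apply: eq_big_nat => s s_lt.
by rewrite ifT //; lia.
Qed.

Lemma xpre_due i : xpre r x (r i) i = 1.
Proof. by case: x_assignment => _ x_sum; rewrite xpreE // -(x_sum i) big_add1. Qed.

Lemma uncovered0 i : uncovered i 0 = 1.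
Proof. by rewrite /uncovered xpreE // big_geq // mulr0 subr0 max_l ?ler01. Qed.

Lemma uncovered_due i : uncovered i (r i) = 0.
Proof.
rewrite /uncovered xpre_due mulr1 max_r // subr_le0.
by rewrite ler_pdivlMr ?mul1r ?ler_nat ?ltr0n.
Qed.

Lemma uncovered_succ_le i a : (a < r i)%N -> uncovered i a.+1 <= uncovered i a.
Proof.
move=> a_lt; rewrite /uncovered !xpreE ?(ltnW a_lt) // big_nat_recr //=.
case: x_assignment => x01 _; have /andP[x_ge0 _] := x01 i a.+1 a_lt.
have kx : 0 <= 5%:R / 2%:R * x a.+1 i :> R by rewrite mulr_ge0 ?divr_ge0 ?ler0n.
by rewrite mulrDr !maxEle; case: ifP; case: ifP; lra.
Qed.

Lemma one_sub_uncovered_le i a : 1 - uncovered i a <= 5%:R / 2%:R * xpre r x a i.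
Proof. by rewrite /uncovered maxEle; case: ifP; lra. Qed.

Lemma uncovered_cost_le i :
  \sum_(0 <= a < r i) (uncovered i a - uncovered i a.+1) * h i a.+1 <=
  5%:R / 2%:R * \sum_(1 <= s < (r i).+1) x s i * h i s.
Proof.
rewrite big_add1 /= !sum_by_parts h_due !mulr0 !add0r mulr_sumr.
apply: ler_sum_nat => t /andP[_ t_lt].
rewrite (telescope_sumr_eq (fun a => - uncovered i a)) => [|//|a _]; last first.
  by rewrite opprK addrC.
rewrite uncovered0 opprK addrC -xpreE ?(ltnW t_lt) // mulrA.
(* [h i 0] is unconstrained, but both prefix sums vanish at [t = 0] *)
case: t t_lt => [|t] t_lt.
  by rewrite uncovered0 subrr mul0r /xpre big_geq // mulr0 mul0r.
apply: ler_wpM2r; first by rewrite subr_ge0 h_antitone.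
exact: one_sub_uncovered_le.
Qed.

(* Item [i] is cut into the jobs [(i, a)], [a < r i], of size [piece i a],
   released at [a.+1] and due at [r i]. *)
Definition piece (i : 'I_N) (a : nat) : R :=
  if (a < r i)%N then (uncovered i a - uncovered i a.+1) * d i else 0.

Definition job_due (j : 'I_N * 'I_T) : nat := r j.1.
Definition job_release (j : 'I_N * 'I_T) : nat := j.2.+1.
Definition job_size (j : 'I_N * 'I_T) : R := piece j.1 j.2.
Definition cap (s : nat) : R := if (0 < s <= T)%N && y s then C s else 0.

Lemma piece_ge0 i a : 0 <= piece i a.
Proof.
rewrite /piece; case: ifP => // lt_r.
by rewrite mulr_ge0 ?subr_ge0 ?uncovered_succ_le // ltW.
Qed.

Lemma job_size_ge0 j : 0 <= job_size j.
Proof. exact: piece_ge0. Qed.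

Lemma cap_ge0 s : 0 <= cap s.
Proof. by rewrite /cap; case: ifP => // /andP[/C_gt0/ltW]. Qed.

Lemma sum_piece_from i a : (a <= r i)%N ->
  \sum_(a' < T | (a <= a')%N) piece i a' = uncovered i a * d i.
Proof.
move=> a_le; have /andP[_ r_le] := r_range i.
rewrite (sum_ord_range a r_le) => [|a' r_a']; last by rewrite /piece ltnNge r_a'.
rewrite (eq_big_nat _ _ (F2 := fun k => (uncovered i k - uncovered i k.+1) * d i)).
  rewrite -mulr_suml (telescope_sumr_eq (fun k => - uncovered i k)) => [|//|k _].
    by rewrite uncovered_due oppr0 add0r opprK.
  by rewrite opprK addrC.
by move=> k /andP[_ k_lt]; rewrite /piece k_lt.
Qed.

Lemma sum_piece i : \sum_(a < T) piece i a = d i.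
Proof. by have := sum_piece_from (leq0n (r i)); rewrite uncovered0 mul1r. Qed.

Lemma piece_cost_le i :
  \sum_(a < T) piece i a * h i a.+1 <=
  5%:R / 2%:R * (d i * \sum_(1 <= s < (r i).+1) x s i * h i s).
Proof.
have /andP[_ r_le] := r_range i.
rewrite (_ : \sum_(a < T) _ = \sum_(0 <= a < r i) piece i a * h i a.+1); last first.
  apply: (sum_ord_range (F := fun a => piece i a * h i a.+1) 0 r_le) => a r_a.
  by rewrite /piece ltnNge r_a mul0r.
rewrite (eq_big_nat _ _
  (F2 := fun a => d i * ((uncovered i a - uncovered i a.+1) * h i a.+1))).
  by rewrite -mulr_sumr mulrCA ler_wpM2l ?uncovered_cost_le ?ltW.
by move=> a /andP[_ a_lt]; rewrite /piece a_lt mulrAC mulrC.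
Qed.

Lemma sum_jobs_between a b :
  \sum_(j | ((a < job_release j) && (job_due j <= b))%N) job_size j = Rab d r x a b.
Proof.
rewrite (eq_bigl (fun j : 'I_N * 'I_T => (r j.1 <= b) && (a <= j.2))%N) => [|j].
  rewrite /job_size.
  rewrite -(pair_big_dep (fun i => r i <= b)%N
                         (fun _ (a' : 'I_T) => a <= a')%N piece).

  rewrite /Rab big_mkcondl; apply: eq_bigr => i _ /=.
  case: ltnP => [a_lt|r_le]; first exact: sum_piece_from (ltnW a_lt).
  by rewrite big1 // => a' a_le; rewrite /piece ltnNge (leq_trans r_le a_le).
exact: andbC.
Qed.

Lemma capS_cap a b : (b <= T)%N -> capS C y a b = \sum_(a.+1 <= s < b.+1) cap s.
Proof.
move=> b_le; rewrite /capS big_mkcond; apply: eq_big_nat => s s_range.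
by rewrite /cap (_ : (0 < s <= T)%N) //; lia.
Qed.

Lemma jobs_hall : hall_condition job_due cap 0 T job_release job_size.
Proof.
move=> a b _ /andP[a_b b_le]; rewrite sum_jobs_between -capS_cap //.
by apply: Rab_le_capS; rewrite a_b b_le.
Qed.

Lemma jobs_in_windows : in_windows job_due 0 T job_release job_size.
Proof.
move=> [i a]; rewrite /job_size /piece /job_due /job_release /=.
by case: ifP => [a_lt _|_]; [have := r_range i; lia | rewrite eqxx].
Qed.

Lemma jobs_schedule :
  exists z, schedule job_due cap 0 T job_release job_size z.
Proof.
apply: schedule_exists.
- exact: cap_ge0.
- exact: job_size_ge0.
- exact: jobs_in_windows.
- exact: jobs_hall.
Qed.

Section FromSchedule.
Variable z : nat -> 'I_N * 'I_T -> R.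
Hypothesis z_sched : schedule job_due cap 0 T job_release job_size z.

Definition xstar (s : nat) (i : 'I_N) : R := (\sum_(a < T) z s (i, a)) / d i.

Lemma z_ge0 s j : 0 <= z s j.
Proof. by case: z_sched. Qed.

Lemma z_eq0_cap0 s : cap s = 0 -> forall j, z s j = 0.
Proof.
case: z_sched => _ _ _ z_cap cap0 j.
have sum_ge0 : 0 <= \sum_j z s j by apply: sumr_ge0 => k _; exact: z_ge0.
have sum0 : \sum_j z s j = 0.
  by apply: le_anti; rewrite sum_ge0 andbT (le_trans (z_cap s)) ?cap0.
by apply: (psumr_eq0P _ sum0) => // k _; exact: z_ge0.
Qed.

Lemma sum_sched_due j : \sum_(1 <= s < (job_due j).+1) z s j = job_size j.
Proof.
case: z_sched => _ z_supp z_sum _; rewrite -(z_sum j).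
have /andP[_ r_le] := r_range j.1.
rewrite [RHS](@big_cat_nat _ _ _ (job_due j).+1) //=.
rewrite [X in _ = _ + X]big1_seq ?addr0 // => s; rewrite mem_index_iota => s_range.
by apply/eqP; apply: contraT => /z_supp; move: s_range; rewrite /job_due; lia.
Qed.

Lemma xstar_ge0 s i : 0 <= xstar s i.
Proof. by rewrite divr_ge0 ?sumr_ge0 ?ltW // => a _; exact: z_ge0. Qed.

Lemma sum_xstar i : \sum_(1 <= s < (r i).+1) xstar s i = 1.
Proof.
rewrite /xstar -mulr_suml exchange_big /=.
rewrite (eq_bigr (fun a : 'I_T => piece i a)) => [|a _]; last first.
  exact: (sum_sched_due (i, a)).
by rewrite sum_piece divff ?gt_eqF.
Qed.

Lemma xstar_le1 s i : (1 <= s <= r i)%N -> xstar s i <= 1.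
Proof.
move=> s_range; rewrite -(sum_xstar i) (bigD1_seq s) /= ?mem_index_iota ?ltnS //.
  by rewrite lerDl sumr_ge0 // => k _; exact: xstar_ge0.
by rewrite /index_iota iota_uniq.
Qed.

Lemma xstar_feasible : feasible T d r C xstar y.
Proof.
split; [split|split] => [i s s_range|i|i s s_range|s s_range].
- by rewrite xstar_ge0 xstar_le1.
- exact: sum_xstar.
- case ys: (y s); first exact: xstar_le1.
  by rewrite /xstar big1 ?mul0r // => a _; apply: z_eq0_cap0; rewrite /cap ys andbF.
- rewrite (eq_bigr (fun i => \sum_(a < T) z s (i, a))) => [|i _]; last first.
    by rewrite /xstar divfK ?gt_eqF.
  apply: (@le_trans _ _ (\sum_i \sum_(a < T) z s (i, a))).
    rewrite [X in _ <= X](bigID (fun i => s <= r i)%N) /= lerDl.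
    by apply: sumr_ge0 => i _; apply: sumr_ge0 => a _; exact: z_ge0.
  rewrite pair_bigA /= (eq_bigr (fun j => z s j)) => [|[i a] _] //.
  case: z_sched => _ _ _ /(_ s); rewrite /cap s_range.
  by case: (y s); rewrite ?mul1r ?mul0r.
Qed.

Lemma xstar_cost_le i :
  d i * \sum_(1 <= s < (r i).+1) xstar s i * h i s <=
  \sum_(a < T) piece i a * h i a.+1.
Proof.
have -> : \sum_(a < T) piece i a * h i a.+1 =
          \sum_(1 <= s < (r i).+1) \sum_(a < T) z s (i, a) * h i a.+1.
  rewrite exchange_big; apply: eq_bigr => a _.
  by rewrite -mulr_suml (sum_sched_due (i, a)).
rewrite mulr_sumr; apply: ler_sum_nat => s s_range.
rewrite /xstar mulrA [d i * _]mulrC divfK ?gt_eqF // mulr_suml.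
apply: ler_sum => a _; have [->|] := eqVneq (z s (i, a)) 0; first by rewrite !mul0r.
case: z_sched => _ z_supp _ _ /z_supp; rewrite /job_release /job_due /= => supp.
by apply: ler_wpM2l; [exact: z_ge0 | apply: h_antitone; lia].
Qed.

End FromSchedule.

Lemma hcost_xstar_le z : schedule job_due cap 0 T job_release job_size z ->
  hcost d r h (xstar z) <= 5%:R / 2%:R * hcost d r h x.
Proof.
move=> z_sched; rewrite /hcost mulr_sumr; apply: ler_sum => i _.
exact: le_trans (xstar_cost_le z_sched i) (piece_cost_le i).
Qed.

End Rounding.

Theorem lemma1 (R : realType) (T N : nat) (d : 'I_N -> R) (r : 'I_N -> nat)
  (K C : nat -> R) (h : 'I_N -> nat -> R)
  (Hinst : cmils_instance T d r K C h)
  (x : nat -> 'I_N -> R) (Hx : assignment r x)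
  (ystar : nat -> bool)
  (Hcap : forall a b : nat, (a < b <= T)%N ->
     capS C ystar a b >= Rab d r x a b) :
  exists xstar : nat -> 'I_N -> R,
    feasible T d r C xstar ystar /\
    hcost d r h xstar <= (5%:R / 2%:R) * hcost d r h x.
Proof.
case: Hinst => [d_gt0 [r_range [_ [C_gt0 [_ [h_antitone h_due]]]]]].
have [z z_sched] := jobs_schedule d_gt0 r_range C_gt0 Hx Hcap.
exists (xstar d z); split.
- exact: (xstar_feasible d_gt0 r_range Hx z_sched).
- exact: (hcost_xstar_le d_gt0 r_range h_antitone h_due z_sched).
Qed.
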